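(* Let $k\in\{0,1,2,\dots\}$ and define the polynomial \[ V_k(x)=2\cdot\frac{(2k+2)!}{\left(-\tfrac12\right)_{2k+2}}\sum_{\ell=0}^{2k+1}\frac{(-1)^\ell\,\left(\ell+\tfrac12\right)_{2k+1-\ell}}{(2k+1-\ell)!\,(\ell+1)}\,x^{\ell+1}, \] and the function \[ \psi_k(x)=-\frac{(2k+2)!}{\pi\left(-\tfrac12\right)_{2k+2}}\,x^{1/2}(1-x)^{2k+1/2},\qquad x\in[0,1]. \] Then $\psi_k(x)>0$ for $x\in(0,1)$, $\int_0^1\psi_k(s)\,ds=1$, and \[ 2\,\mathrm{PV}\!\int_0^1\frac{\psi_k(s)}{x-s}\,ds=V_k'(x)\qquad\text{for all }x\in(0,1), \] where $\mathrm{PV}$ denotes the Cauchy principal value integral. (These are the variational (Euler–Lagrange) conditions on the support identifying $\psi_k(x)\,dx$ as the equilibrium measure of $V_k$, i.e.\ the limiting mean eigenvalue density of the unitary ensemble $\frac{1}{Z_n}e^{-n\,\mathrm{tr}\,V_k(M)}dM$, which is supported on $[0,1]$ and vanishes like $(1-x)^{2k+1/2}$ at the right endpoint.)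
   Context: $(a)_m=a(a+1)\cdots(a+m-1)$ denotes the Pochhammer symbol, with $(a)_0=1$. The equilibrium measure $\mu_V$ of an external field $V$ is the unique minimizer of $I_V(\mu)=\iint\log\frac{1}{|x-y|}d\mu(x)d\mu(y)+\int V\,d\mu$ over Borel probability measures $\mu$ on $\mathbb R$; on its support it satisfies $2\int\log|x-y|\,d\mu(y)-V(x)=\text{const}$, whose derivative on the interior of the support is the principal value equation above. *)

From Stdlib Require Import Arith Reals Lra.
Open Scope R_scope.

Fixpoint poch (a : R) (m : nat) : R :=
  match m with
  | O => 1
  | S m' => poch a m' * (a + INR m')
  end.

Definition cst (k : nat) : R :=
  INR (fact (2 * k + 2)) / poch (-1/2) (2 * k + 2).

Definition Vk (k : nat) (x : R) : R :=
  2 * cst k *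
  sum_f_R0 (fun l => (-1) ^ l * poch (INR l + 1/2) (2 * k + 1 - l)
                     / (INR (fact (2 * k + 1 - l)) * (INR l + 1)) * x ^ (l + 1))
           (2 * k + 1).

Definition psik (k : nat) (x : R) : R :=
  - (cst k / PI) * sqrt x * ((1 - x) ^ (2 * k) * sqrt (1 - x)).

(* Cauchy principal value: PV int_a^b f(s)/(x-s) ds = L, i.e.
   lim_{eps -> 0+} ( int_a^{x-eps} + int_{x+eps}^b ) f(s)/(x-s) ds = L,
   where for all small eps both integrals exist. *)
Definition PV_cauchy (f : R -> R) (a b x L : R) : Prop :=
  forall e, 0 < e -> exists d, 0 < d /\
    forall eps, 0 < eps < d ->
      exists (pr1 : Riemann_integrable (fun s => f s / (x - s)) a (x - eps))
             (pr2 : Riemann_integrable (fun s => f s / (x - s)) (x + eps) b),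
        Rabs (RiemannInt pr1 + RiemannInt pr2 - L) < e.

From Stdlib Require Import Arith Reals Lra Lia.
From Coquelicot Require Import Coquelicot.
Open Scope R_scope.
Set Bullet Behavior "Strict Subproofs".

(* Write w(s) = sqrt s * sqrt (1 - s) and n = 2k.  Then
   psi_k(s) = K (1 - s)^n w(s) with K = -(cst k)/PI > 0, which gives positivity.

   Integrating by parts, M_j = int_0^1 (1-s)^j w(s) ds satisfies
   M_0 = PI/8 and (j+3) M_{j+1} = (j+3/2) M_j, so M_j = PI * mom j with
   mom j = (1/2)_{j+1} / (2 (j+1)! (j+2)); normalisation is cst k * mom n = -1.

   With b = 1 - x, (1-s)^n = b^n + (x - s) q(s) where
   q(s) = sum_{j<n} b^(n-1-j) (1-s)^j, hence
     psi_k(s)/(x-s) = K (q(s) w(s) + b^n w(s)/(x-s)).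
   The second term has an explicit primitive whose only singular part near
   s = x is -(w x / 2) ln((x-s)^2), which is even in s - x and cancels in the
   principal value (lemma PV_log_primitive).  The PV therefore equals
   -cst k * (R_n(b) + b^n (x - 1/2)), R_n(b) = sum_{j<n} mom j b^(n-1-j).

   V_k' = 2 cst k * P_n where P_n(x) = sum_l c_{n,l} x^l;
   a Pascal-type identity on the c_{n,l} gives P_{n+1} = (1-x) P_n - mom n,
   hence P_n(x) = -(R_n(1-x) + (1-x)^n (x - 1/2)), which is twice the PV. *)

Lemma continuous_Rplus (f g : R -> R) x :
  continuous f x -> continuous g x -> continuous (fun t => f t + g t) x.
Proof. exact (continuous_plus f g x). Qed.

Lemma continuous_Rminus (f g : R -> R) x :
  continuous f x -> continuous g x -> continuous (fun t => f t - g t) x.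
Proof. exact (continuous_minus f g x). Qed.

Lemma continuous_Rmult (f g : R -> R) x :
  continuous f x -> continuous g x -> continuous (fun t => f t * g t) x.
Proof. exact (continuous_mult f g x). Qed.

Lemma continuous_Rpow (f : R -> R) n x :
  continuous f x -> continuous (fun t => f t ^ n) x.
Proof.
  intros Hf; induction n as [|n IH]; simpl.
  - apply continuous_const.
  - now apply continuous_Rmult.
Qed.

Lemma continuous_Rdiv (f g : R -> R) x :
  g x <> 0 -> continuous f x -> continuous g x -> continuous (fun t => f t / g t) x.
Proof. intros; apply continuous_Rmult; auto; now apply continuous_Rinv_comp. Qed.

Lemma continuous_Rdiv_const (f : R -> R) c x :
  continuous f x -> continuous (fun t => f t / c) x.
Proof. intros; apply continuous_Rmult; auto; apply continuous_const. Qed.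

Lemma continuous_ln_comp (f : R -> R) x :
  0 < f x -> continuous f x -> continuous (fun t => ln (f t)) x.
Proof. intros; apply (continuous_comp f ln); auto; now apply continuous_ln. Qed.

Ltac continuity_tac :=
  repeat match goal with
  | |- continuous (fun _ => ?c) _ => apply continuous_const
  | |- continuous (fun t => t) _ => apply continuous_id
  | |- continuous (fun t => _ + _) _ => apply continuous_Rplus
  | |- continuous (fun t => _ - _) _ => apply continuous_Rminus
  | |- continuous (fun t => _ * _) _ => apply continuous_Rmult
  | |- continuous (fun t => _ / ?c) _ => apply continuous_Rdiv_const
  | |- continuous (fun t => - _) _ => apply (continuous_opp (V := R_NormedModule))
  | |- continuous (fun t => _ ^ _) _ => apply continuous_Rpow
  | |- continuous (fun t => sqrt _) _ => apply continuous_sqrt_comp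
  | |- continuous (fun t => atan _) _ => apply continuous_atan_comp
  | |- continuous sqrt _ => apply continuous_sqrt
  | |- continuous (Rmult ?c) _ =>
      apply (continuous_Rmult (fun _ => c) (fun t => t))
  | |- continuous (Rminus ?c) _ =>
      apply (continuous_Rminus (fun _ => c) (fun t => t))
  end.

Lemma continuity_pt_continuous (f : R -> R) x : continuous f x -> continuity_pt f x.
Proof. apply continuity_pt_filterlim. Qed.

Lemma continuous_continuity_pt (f : R -> R) x : continuity_pt f x -> continuous f x.
Proof. apply continuity_pt_filterlim. Qed.

(* Integration.  Coquelicot states equalities of integrals in its module
   types; as_real_eq exposes them as equalities in R for ring/field. *)
Ltac as_real_eq := match goal with |- ?a = ?b => change (@eq R a b) end.

Lemma is_derive_value (f : R -> R) x l l' : is_derive f x l -> l = l' -> is_derive f x l'.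
Proof. now intros H <-. Qed.

Lemma ex_RInt_cont (f : R -> R) a b : (forall x, continuous f x) -> ex_RInt f a b.
Proof. intros H. apply (@ex_RInt_continuous R_CompleteNormedModule). intros; apply H. Qed.

Lemma RInt_Rmult_l (f : R -> R) a b c : ex_RInt f a b ->
  RInt (fun s => c * f s) a b = c * RInt f a b.
Proof.
  intros Hf. apply (@is_RInt_unique R_CompleteNormedModule).
  apply (@is_RInt_scal R_NormedModule f a b c). now apply (@RInt_correct R_CompleteNormedModule).
Qed.

Lemma RInt_lincomb (f g : R -> R) a b (al be : R) : ex_RInt f a b -> ex_RInt g a b ->
  RInt (fun s => al * f s + be * g s) a b = al * RInt f a b + be * RInt g a b.
Proof.
  intros Hf Hg. apply (@is_RInt_unique R_CompleteNormedModule).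
  apply (@is_RInt_plus R_NormedModule (fun s => al * f s) (fun s => be * g s)).
  - apply (@is_RInt_scal R_NormedModule f a b al). now apply (@RInt_correct R_CompleteNormedModule).
  - apply (@is_RInt_scal R_NormedModule g a b be). now apply (@RInt_correct R_CompleteNormedModule).
Qed.

Lemma is_derive_RInt_cont (f : R -> R) a s :
  (forall t, continuous f t) -> is_derive (fun t => RInt f a t) s (f s).
Proof.
  intros Hf. apply is_derive_RInt with a; [|apply Hf].
  apply filter_forall. intro t. now apply RInt_correct, ex_RInt_cont.
Qed.

(* The projection of R onto [a,b]; used to extend a function continuous on
   [a,b] to a function continuous everywhere. *)
Definition clamp (a b z : R) := Rmax a (Rmin b z).

Lemma clamp_in a b z : a <= b -> a <= clamp a b z <= b.
Proof. intros; unfold clamp, Rmax, Rmin; repeat destruct Rle_dec; lra. Qed.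

Lemma clamp_id a b z : a <= z <= b -> clamp a b z = z.
Proof. intros; unfold clamp, Rmax, Rmin; repeat destruct Rle_dec; lra. Qed.

Lemma clamp_continuity_pt a b z : continuity_pt (clamp a b) z.
Proof.
  intros e He. exists e. split; auto.
  intros y [_ Hy]. simpl in *. unfold R_dist in *. unfold clamp, Rmax, Rmin.
  apply Rabs_def2 in Hy; repeat destruct Rle_dec; apply Rabs_def1; lra.
Qed.

(* Fundamental theorem of calculus when F' = f is only known on the open
   interval (a,b) and f, F are continuous on [a,b] (e.g. square-root type
   primitives, not differentiable at the endpoints). *)
Lemma RInt_open_primitive (f F : R -> R) (a b : R) : a <= b ->
  (forall z, a <= z <= b -> continuity_pt f z) ->
  (forall z, a <= z <= b -> continuity_pt F z) ->
  (forall z, a < z < b -> derivable_pt_lim F z (f z)) ->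
  RInt f a b = F b - F a.
Proof.
  intros Hab Hf HF HD.
  set (g := fun z => f (clamp a b z)).
  assert (Hg : forall z, continuous g z).
  { intro z. apply continuous_continuity_pt, (continuity_pt_comp (clamp a b) f).
    - apply clamp_continuity_pt.
    - apply Hf, clamp_in; auto. }
  assert (Hprim : forall y, is_derive (fun t => RInt g a t) y (g y))
    by (intro y; now apply is_derive_RInt_cont).
  assert (Hfg : forall z, a <= z <= b -> f z = g z).
  { intros z Hz. unfold g. now rewrite clamp_id. }
  rewrite (RInt_ext f g) by (intros z Hz; apply Hfg; rewrite Rmin_left, Rmax_right in Hz; lra).
  destruct (MVT_gen (fun t => F t - RInt g a t) a b (fun _ => 0)) as [c [_ Hc]].
  - intros z Hz. rewrite Rmin_left, Rmax_right in Hz by lra.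
    replace 0 with (f z - g z) by (rewrite Hfg; lra).
    apply (is_derive_minus F (fun t => RInt g a t)); [|apply Hprim].
    apply is_derive_Reals, HD; auto.
  - intros z Hz. rewrite Rmin_left, Rmax_right in Hz by lra.
    apply continuity_pt_minus; [now apply HF|].
    apply derivable_continuous_pt. exists (g z). apply is_derive_Reals, Hprim.
  - rewrite RInt_point in Hc. unfold zero in Hc; simpl in Hc. lra.
Qed.

(* The weight w and theta, a primitive of 1/w on (0,1)
   (theta(s) = arcsin(2s-1) + PI/2, written with atan, which is defined on all of R). *)
Definition w (s : R) := sqrt s * sqrt (1 - s).
Definition theta (s : R) := 4 * atan (sqrt s / (1 + sqrt (1 - s))).

Lemma continuous_w x : continuous w x.
Proof. unfold w. continuity_tac. Qed.

Lemma continuous_theta x : continuous theta x.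
Proof.
  unfold theta. continuity_tac. apply continuous_Rdiv; [|continuity_tac..].
  pose proof (sqrt_pos (1 - x)); lra.
Qed.

Lemma w_0 : w 0 = 0.
Proof. unfold w. rewrite sqrt_0. ring. Qed.

Lemma w_1 : w 1 = 0.
Proof. unfold w. rewrite Rminus_diag, sqrt_0. ring. Qed.

Lemma theta_0 : theta 0 = 0.
Proof. unfold theta. rewrite sqrt_0, Rdiv_0_l, atan_0. ring. Qed.

Lemma theta_1 : theta 1 = PI.
Proof.
  unfold theta. rewrite sqrt_1, Rminus_diag, sqrt_0, Rplus_0_r, Rdiv_1_l, Rinv_1, atan_1.
  field.
Qed.

(* On (0,1) the square roots p = sqrt s, q = sqrt (1-s) are positive with
   p^2 = s and q^2 = 1 - s; derivative identities are polynomial in p, q. *)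
Lemma sqrt_pair s : 0 < s < 1 ->
  sqrt s * sqrt s = s /\ sqrt (1 - s) * sqrt (1 - s) = 1 - s /\
  0 < sqrt s /\ 0 < sqrt (1 - s).
Proof. intros. repeat split; try (apply sqrt_sqrt; lra); apply sqrt_lt_R0; lra. Qed.

Lemma pow_SS_circle p q n : q * q = 1 - p * p -> q ^ S (S n) = q ^ n * (1 - p * p).
Proof. intros H. simpl. rewrite <- H. ring. Qed.

(* field_simplify leaves goals  num / den = 0 ; it suffices that num = 0. *)
Lemma Rdiv_eq0 a b : a = 0 -> a / b = 0.
Proof. intros ->; apply Rdiv_0_l. Qed.

Ltac sqrt_subst s Hs :=
  try replace (1 + - s) with (1 - s) in * by ring;
  let Hp := fresh "Hp" in let Hq := fresh "Hq" in
  let Hp0 := fresh "Hp0" in let Hq0 := fresh "Hq0" in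
  destruct (sqrt_pair s Hs) as [Hp [Hq [Hp0 Hq0]]];
  let p := fresh "p" in let q := fresh "q" in
  set (p := sqrt s) in *; set (q := sqrt (1 - s)) in *;
  clearbody p q;
  let Es := fresh "Es" in assert (Es : s = p * p) by lra; subst s.

Ltac circle_field p q Hq :=
  apply Rminus_diag_uniq; field_simplify; try lra;
  apply Rdiv_eq0; repeat rewrite (pow_SS_circle p q _ Hq); ring.

Definition moment_integrand (j : nat) (s : R) := (1 - s) ^ j * w s.

Lemma continuous_moment_integrand j x : continuous (moment_integrand j) x.
Proof. unfold moment_integrand. apply continuous_Rmult; [continuity_tac | apply continuous_w]. Qed.

(* M_j = PI * mom j. *)
Fixpoint mom (j : nat) : R :=
  match j with O => 1/8 | S j' => mom j' * (INR j' + 3/2) / (INR j' + 3) end.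

Definition w_primitive (s : R) := (2 * s - 1) * w s / 4 + theta s / 8.

Lemma is_derive_w_primitive s : 0 < s < 1 -> is_derive w_primitive s (w s).
Proof.
  intros Hs. unfold w_primitive, theta, w. auto_derive.
  - pose proof (sqrt_pos (1 + - s)); repeat split; lra.
  - sqrt_subst s Hs. circle_field p q Hq.
Qed.

(* Integration by parts for the moments: the derivative of
   (1-s)^(j+1) s w(s) is -(j+3/2)(1-s)^j w + (j+3)(1-s)^(j+1) w. *)
Definition moment_step (j : nat) (s : R) := (1 - s) ^ S j * s * w s.

Lemma is_derive_moment_step j s : 0 < s < 1 ->
  is_derive (moment_step j) s
    (- (INR j + 3/2) * moment_integrand j s + (INR j + 3) * moment_integrand (S j) s).
Proof.
  intros Hs. unfold moment_step, moment_integrand, w. auto_derive.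
  - repeat split; lra.
  - sqrt_subst s Hs.
    change (match j with 0%nat => 1 | S _ => INR j + 1 end) with (INR (S j)).
    rewrite S_INR. simpl pow. set (a := (1 - p * p) ^ j).
    circle_field p q Hq.
Qed.

(* M_0 = PI/8 (the area under the semicircle of radius 1/2). *)
Lemma moment_0 : RInt (moment_integrand 0) 0 1 = PI / 8.
Proof.
  rewrite (RInt_open_primitive (moment_integrand 0) w_primitive 0 1); try lra.
  - unfold w_primitive. rewrite w_0, w_1, theta_0, theta_1. as_real_eq. field.
  - intros z Hz; apply continuity_pt_continuous, continuous_moment_integrand.
  - intros z Hz; apply continuity_pt_continuous. unfold w_primitive.
    pose proof (continuous_w z); pose proof (continuous_theta z). continuity_tac; auto.
  - intros z Hz. apply is_derive_Reals. unfold moment_integrand. rewrite pow_O, Rmult_1_l.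
    now apply is_derive_w_primitive.
Qed.

(* (j+3) M_{j+1} = (j+3/2) M_j, since moment_step vanishes at 0 and 1. *)
Lemma moment_rec j :
  (INR j + 3) * RInt (moment_integrand (S j)) 0 1 = (INR j + 3/2) * RInt (moment_integrand j) 0 1.
Proof.
  assert (Hex : forall i, ex_RInt (moment_integrand i) 0 1)
    by (intro; apply ex_RInt_cont, continuous_moment_integrand).
  assert (E : - (INR j + 3/2) * RInt (moment_integrand j) 0 1
              + (INR j + 3) * RInt (moment_integrand (S j)) 0 1
              = moment_step j 1 - moment_step j 0).
  { rewrite <- RInt_lincomb by apply Hex. apply RInt_open_primitive; try lra.
    - intros z Hz; apply continuity_pt_continuous.
      pose proof (continuous_moment_integrand j z).
      pose proof (continuous_moment_integrand (S j) z).
      continuity_tac; auto.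
    - intros z Hz; apply continuity_pt_continuous. unfold moment_step.
      pose proof (continuous_w z). continuity_tac; auto.
    - intros z Hz. apply is_derive_Reals, is_derive_moment_step; auto. }
  unfold moment_step in E. rewrite w_0, w_1, !Rmult_0_r in E. lra.
Qed.

Lemma moment_value j : RInt (moment_integrand j) 0 1 = PI * mom j.
Proof.
  induction j as [|j IH].
  - rewrite moment_0. simpl. field.
  - simpl. pose proof (moment_rec j) as H. pose proof (pos_INR j).
    apply (Rmult_eq_reg_l (INR j + 3)); [|lra]. rewrite H, IH. field. lra.
Qed.

Lemma poch_S_left a m : poch a (S m) = a * poch (a + 1) m.
Proof.
  induction m as [|m IH].
  - simpl. ring.
  - change (poch a (S (S m))) with (poch a (S m) * (a + INR (S m))).
    rewrite IH. change (poch (a + 1) (S m)) with (poch (a + 1) m * (a + 1 + INR m)).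
    rewrite S_INR. ring.
Qed.

Lemma poch_pos a m : 0 < a -> 0 < poch a m.
Proof.
  intros Ha. induction m as [|m IH]; simpl; [lra|].
  pose proof (pos_INR m). apply Rmult_lt_0_compat; lra.
Qed.

Lemma mom_closed j : mom j = poch (1/2) (S j) / (INR (fact (S j)) * 2 * (INR j + 2)).
Proof.
  induction j as [|j IH].
  - simpl. field.
  - change (mom (S j)) with (mom j * (INR j + 3/2) / (INR j + 3)). rewrite IH.
    change (poch (1/2) (S (S j))) with (poch (1/2) (S j) * (1/2 + INR (S j))).
    rewrite (fact_simpl (S j)), mult_INR, !S_INR.
    pose proof (pos_INR j). pose proof (INR_fact_lt_0 (S j)).
    field. lra.
Qed.

(* (-1/2)_{2k+2} < 0 < (2k+2)!, hence cst k < 0. *)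
Lemma cst_neg k : cst k < 0.
Proof.
  unfold cst. replace (2 * k + 2)%nat with (S (2 * k + 1)) by lia.
  rewrite poch_S_left. pose proof (INR_fact_lt_0 (S (2 * k + 1))).
  pose proof (poch_pos (-1/2 + 1) (2 * k + 1) ltac:(lra)).
  unfold Rdiv. apply Rmult_pos_neg; auto. apply Rinv_neg. nra.
Qed.

Lemma cst_mom k : cst k * mom (2 * k) = -1.
Proof.
  unfold cst. rewrite mom_closed. replace (2 * k + 2)%nat with (S (S (2 * k))) by lia.
  rewrite poch_S_left. replace (-1/2 + 1) with (1/2) by field.
  rewrite (fact_simpl (S (2 * k))), mult_INR, !S_INR.
  pose proof (INR_fact_lt_0 (S (2 * k))). pose proof (poch_pos (1/2) (S (2 * k)) ltac:(lra)).
  pose proof (pos_INR (2 * k)). field. repeat split; lra.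
Qed.

Lemma psik_moment k s : psik k s = - (cst k / PI) * moment_integrand (2 * k) s.
Proof. unfold psik, moment_integrand, w. ring. Qed.

Lemma psik_const_pos k : 0 < - (cst k / PI).
Proof.
  pose proof (cst_neg k). pose proof PI_RGT_0.
  assert (0 < / PI) by (apply Rinv_0_lt_compat; lra). unfold Rdiv. nra.
Qed.

Lemma psik_pos k x : 0 < x < 1 -> 0 < psik k x.
Proof.
  intros Hx. rewrite psik_moment. apply Rmult_lt_0_compat; [apply psik_const_pos|].
  unfold moment_integrand, w.
  pose proof (sqrt_lt_R0 x ltac:(lra)). pose proof (sqrt_lt_R0 (1 - x) ltac:(lra)).
  pose proof (pow_lt (1 - x) (2 * k) ltac:(lra)).
  repeat apply Rmult_lt_0_compat; auto.
Qed.

(* Second claim: int_0^1 psi_k = K PI mom (2k) = -cst k * mom (2k) = 1. *)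
Lemma continuous_psik k x : continuous (psik k) x.
Proof. unfold psik. continuity_tac. Qed.

Lemma psik_normalised k : exists pr : Riemann_integrable (psik k) 0 1, RiemannInt pr = 1.
Proof.
  assert (Hex : ex_RInt (psik k) 0 1) by (apply ex_RInt_cont, continuous_psik).
  exists (ex_RInt_Reals_0 _ _ _ Hex). rewrite <- RInt_Reals.
  rewrite (RInt_ext _ (fun s => - (cst k / PI) * moment_integrand (2 * k) s))
    by (intros s _; apply psik_moment).
  rewrite RInt_Rmult_l by apply ex_RInt_cont, continuous_moment_integrand.
  rewrite moment_value. pose proof (cst_mom k). pose proof PI_neq0.
  as_real_eq. field_simplify; lra.
Qed.

Definition dV_coef (n l : nat) : R :=
  (-1) ^ l * poch (INR l + 1/2) (n + 1 - l) / INR (fact (n + 1 - l)).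

Definition dV_poly (n : nat) (x : R) : R := sum_f_R0 (fun l => dV_coef n l * x ^ l) (n + 1).

Fixpoint mom_poly (b : R) (n : nat) : R :=
  match n with O => 0 | S m => mom m + b * mom_poly b m end.

Lemma is_derive_power_sum (a : nat -> R) N x :
  is_derive (fun y => sum_f_R0 (fun l => a l * y ^ (l + 1)) N) x
            (sum_f_R0 (fun l => a l * INR (l + 1) * x ^ l) N).
Proof.
  induction N as [|N IH]; simpl.
  - auto_derive; auto. simpl. as_real_eq. ring.
  - apply (is_derive_plus (fun y => sum_f_R0 (fun l => a l * y ^ (l + 1)) N)
                          (fun y => a (S N) * y ^ S (N + 1))); auto.
    auto_derive; auto. replace (N + 1)%nat with (S N) by lia. simpl. as_real_eq. ring.
Qed.

(* Differentiating V_k termwise; the factor (l+1) cancels the denominator. *)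
Lemma is_derive_Vk k x : is_derive (Vk k) x (2 * cst k * dV_poly (2 * k) x).
Proof.
  unfold Vk.
  replace (dV_poly (2 * k) x) with
    (sum_f_R0 (fun l => (-1) ^ l * poch (INR l + 1/2) (2 * k + 1 - l)
                 / (INR (fact (2 * k + 1 - l)) * (INR l + 1)) * INR (l + 1) * x ^ l) (2 * k + 1)).
  { apply (is_derive_scal (fun y => sum_f_R0 (fun l => (-1) ^ l * poch (INR l + 1/2) (2 * k + 1 - l)
                     / (INR (fact (2 * k + 1 - l)) * (INR l + 1)) * y ^ (l + 1)) (2 * k + 1))).
    apply is_derive_power_sum. }
  unfold dV_poly. apply sum_eq. intros i Hi. unfold dV_coef.
  rewrite plus_INR. change (INR 1) with 1.
  pose proof (INR_fact_lt_0 (2 * k + 1 - i)). pose proof (pos_INR i).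
  field. split; lra.
Qed.

(* Pascal-type identities for the coefficients (interior, first and last),
   coming from (a)_{m+1} = a (a+1)_m and (m+1)! = (m+1) m!. *)
Lemma dV_coef_pascal n i : (i <= n)%nat ->
  dV_coef (S n) (S i) = dV_coef n (S i) - dV_coef n i.
Proof.
  intros Hi. unfold dV_coef.
  replace (S n + 1 - S i)%nat with (S (n - i)) by lia.
  replace (n + 1 - S i)%nat with (n - i)%nat by lia.
  replace (n + 1 - i)%nat with (S (n - i)) by lia.
  set (m := (n - i)%nat).
  change (poch (INR (S i) + 1/2) (S m))
    with (poch (INR (S i) + 1/2) m * (INR (S i) + 1/2 + INR m)).
  rewrite (poch_S_left (INR i + 1/2) m).
  replace (INR i + 1/2 + 1) with (INR (S i) + 1/2) by (rewrite S_INR; ring).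
  rewrite (fact_simpl m), mult_INR, !S_INR. simpl pow.
  pose proof (INR_fact_lt_0 m). pose proof (pos_INR m).
  field. lra.
Qed.

Lemma dV_coef_first n : dV_coef (S n) 0 = dV_coef n 0 - mom n.
Proof.
  unfold dV_coef. rewrite mom_closed. change (INR 0) with 0. rewrite Rplus_0_l.
  replace (S n + 1 - 0)%nat with (S (S n)) by lia.
  replace (n + 1 - 0)%nat with (S n) by lia.
  change (poch (1/2) (S (S n))) with (poch (1/2) (S n) * (1/2 + INR (S n))).
  rewrite (fact_simpl (S n)), mult_INR, !S_INR. simpl pow.
  pose proof (INR_fact_lt_0 (S n)). pose proof (pos_INR n).
  field. lra.
Qed.

Lemma dV_coef_last n : dV_coef (S n) (S (S n)) = - dV_coef n (S n).
Proof.
  unfold dV_coef. replace (S n + 1 - S (S n))%nat with 0%nat by lia.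
  replace (n + 1 - S n)%nat with 0%nat by lia. simpl. field.
Qed.

Lemma dV_poly_rec n x : dV_poly (S n) x = (1 - x) * dV_poly n x - mom n.
Proof.
  unfold dV_poly.
  replace (S n + 1)%nat with (S (S n)) by lia.
  replace (n + 1)%nat with (S n) by lia.
  set (P := sum_f_R0 (fun l => dV_coef n l * x ^ l) (S n)).
  assert (Hhead : P = dV_coef n 0 * x ^ 0
                      + sum_f_R0 (fun i => dV_coef n (S i) * x ^ S i) n).
  { unfold P. now rewrite decomp_sum by lia. }
  assert (Hshift : x * P = sum_f_R0 (fun i => dV_coef n i * x ^ S i) n
                           + dV_coef n (S n) * x ^ S (S n)).
  { unfold P. rewrite scal_sum, tech5. f_equal.
    - apply sum_eq; intros; simpl; ring.
    - simpl; ring. }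
  assert (Hmid : sum_f_R0 (fun i => dV_coef (S n) (S i) * x ^ S i) n =
                 sum_f_R0 (fun i => dV_coef n (S i) * x ^ S i) n
                 - sum_f_R0 (fun i => dV_coef n i * x ^ S i) n).
  { rewrite <- minus_sum. apply sum_eq. intros i Hi. rewrite dV_coef_pascal by lia. ring. }
  rewrite decomp_sum by lia. simpl pred. rewrite tech5.
  replace ((1 - x) * P) with (P - x * P) by ring.
  rewrite Hshift, Hhead at 1. rewrite Hmid, dV_coef_first, dV_coef_last. ring.
Qed.

Lemma dV_poly_closed n x : dV_poly n x = - (mom_poly (1 - x) n + (1 - x) ^ n * (x - 1/2)).
Proof.
  induction n as [|n IH].
  - unfold dV_poly, dV_coef. simpl. field.
  - rewrite dV_poly_rec, IH. simpl. ring.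
Qed.

(* The Cauchy transform of w.  log_arg x s is positive on [0,1] for x in (0,1),
   so cauchy_reg x is smooth there; cauchy_prim x is a primitive of
   w(s)/(x-s) away from s = x, with logarithmic singular part. *)
Definition log_arg (x s : R) := sqrt x * sqrt (1 - s) + sqrt (1 - x) * sqrt s.

Definition cauchy_reg (x s : R) := (x - 1/2) * theta s - w s + 2 * w x * ln (log_arg x s).

Definition cauchy_prim (x s : R) := cauchy_reg x s - w x * ln ((x - s) ^ 2) / 2.

Lemma square_pos_neq a : a <> 0 -> 0 < a ^ 2.
Proof. intros Ha. rewrite <- Rsqr_pow2. now apply Rsqr_pos_lt. Qed.

Lemma log_arg_pos x s : 0 < x < 1 -> 0 <= s <= 1 -> 0 < log_arg x s.
Proof.
  intros Hx Hs. unfold log_arg.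
  pose proof (sqrt_lt_R0 x ltac:(lra)). pose proof (sqrt_lt_R0 (1 - x) ltac:(lra)).
  pose proof (sqrt_pos s). pose proof (sqrt_pos (1 - s)).
  destruct (Rlt_or_le s 1) as [Hs1 | Hs1].
  - pose proof (sqrt_lt_R0 (1 - s) ltac:(lra)). nra.
  - replace s with 1 by lra. rewrite sqrt_1, Rminus_diag, sqrt_0. lra.
Qed.

Lemma is_derive_cauchy_prim x s : 0 < x < 1 -> 0 < s < 1 -> s <> x ->
  is_derive (cauchy_prim x) s (w s / (x - s)).
Proof.
  intros Hx Hs Hsx.
  assert (HA : 0 < log_arg x s) by (apply log_arg_pos; lra).
  assert (Hxs : 0 < (x - s) ^ 2) by (apply square_pos_neq; lra).
  unfold cauchy_prim, cauchy_reg, theta, w, log_arg. unfold log_arg in HA.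
  auto_derive.
  { replace (1 + - s) with (1 - s) by ring. pose proof (sqrt_pos (1 - s)).
    repeat split; lra. }
  destruct (sqrt_pair x Hx) as [Hu [Hv [Hu0 Hv0]]].
  set (u := sqrt x) in *. set (v := sqrt (1 - x)) in *. clearbody u v.
  assert (Ex : x = u * u) by lra. subst x.
  sqrt_subst s Hs.
  apply Rminus_diag_uniq. field_simplify.
  - apply Rdiv_eq0. repeat rewrite (pow_SS_circle u v _ Hv).
    repeat rewrite (pow_SS_circle p q _ Hq). ring.
  - repeat split; try lra; nra.
Qed.

Lemma continuous_cauchy_reg x s : 0 < x < 1 -> 0 <= s <= 1 -> continuous (cauchy_reg x) s.
Proof.
  intros Hx Hs. unfold cauchy_reg.
  pose proof (continuous_w s). pose proof (continuous_theta s).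
  continuity_tac; auto.
  apply continuous_ln_comp; [now apply log_arg_pos|]. unfold log_arg. continuity_tac.
Qed.

Lemma continuous_cauchy_prim x s : 0 < x < 1 -> 0 <= s <= 1 -> s <> x ->
  continuous (cauchy_prim x) s.
Proof.
  intros Hx Hs Hsx. unfold cauchy_prim.
  apply continuous_Rminus; [now apply continuous_cauchy_reg|].
  continuity_tac. apply continuous_ln_comp; [apply square_pos_neq; lra|]. continuity_tac.
Qed.

Lemma ln_sqrt_half y : 0 < y -> ln (sqrt y) = ln y / 2.
Proof.
  intros Hy. pose proof (sqrt_lt_R0 y Hy).
  rewrite <- (sqrt_sqrt y) at 2 by lra. rewrite ln_mult by auto. field.
Qed.

(* The increment of cauchy_prim over [0,1]: the logarithms cancel since
   log_arg x 0 = sqrt (1-x), log_arg x 1 = sqrt x, (x-0)^2 = x^2, (x-1)^2 = (1-x)^2. *)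
Lemma cauchy_prim_increment x : 0 < x < 1 ->
  cauchy_prim x 1 - cauchy_prim x 0 = (x - 1/2) * PI.
Proof.
  intros Hx. unfold cauchy_prim, cauchy_reg, log_arg.
  rewrite theta_0, theta_1, w_0, w_1, !Rminus_diag, !Rminus_0_r, !sqrt_0, !sqrt_1.
  replace (sqrt x * 0 + sqrt (1 - x) * 1) with (sqrt (1 - x)) by ring.
  replace (sqrt x * 1 + sqrt (1 - x) * 0) with (sqrt x) by ring.
  replace ((x - 1) ^ 2) with ((1 - x) ^ 2) by ring.
  rewrite !ln_pow, !ln_sqrt_half by lra. simpl INR. field.
Qed.

(* The difference quotient of (1-s)^n at x, with b = 1 - x:
   diff_quot b n s = sum_{j<n} (1-s)^j b^(n-1-j). *)
Fixpoint diff_quot (b : R) (n : nat) (s : R) : R :=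
  match n with O => 0 | S m => (1 - s) ^ m + b * diff_quot b m s end.

Lemma diff_quot_spec x n s : diff_quot (1 - x) n s * (x - s) = (1 - s) ^ n - (1 - x) ^ n.
Proof.
  induction n as [|n IH]; simpl; [ring|].
  transitivity ((1 - s) ^ n * (x - s) + (1 - x) * (diff_quot (1 - x) n s * (x - s)));
    [ring | rewrite IH; ring].
Qed.

Lemma continuous_diff_quot_w b n s : continuous (fun t => diff_quot b n t * w t) s.
Proof.
  apply continuous_Rmult; [|apply continuous_w].
  induction n as [|n IH]; simpl; continuity_tac; auto.
Qed.

Lemma RInt_diff_quot_w b n : RInt (fun t => diff_quot b n t * w t) 0 1 = PI * mom_poly b n.
Proof.
  induction n as [|n IH].
  - simpl. rewrite RInt_Rmult_l by apply ex_RInt_cont, continuous_w. as_real_eq; ring.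
  - rewrite (RInt_ext _ (fun s => 1 * moment_integrand n s + b * (diff_quot b n s * w s)))
      by (intros; unfold moment_integrand; simpl; as_real_eq; ring).
    rewrite RInt_lincomb
      by (apply ex_RInt_cont; first [apply continuous_moment_integrand | apply continuous_diff_quot_w]).
    rewrite moment_value, IH. simpl. as_real_eq; ring.
Qed.

(* If G is a
   primitive of g(s)/(x-s) on [a,b] minus {x} and G = D + c ln((x-s)^2) with D
   continuous at x, the two one-sided integrals sum to
   G(b) - G(a) + (D(x+eps) - D(x-eps)): the logarithms at x -/+ eps coincide. *)
Lemma PV_log_primitive (g G D : R -> R) (a b x c : R) :
  a < x < b ->
  (forall s, a <= s <= b -> s <> x -> continuity_pt (fun t => g t / (x - t)) s) ->
  (forall s, a <= s <= b -> s <> x -> continuity_pt G s) ->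
  (forall s, a < s < b -> s <> x -> derivable_pt_lim G s (g s / (x - s))) ->
  (forall s, G s = D s + c * ln ((x - s) ^ 2)) ->
  continuity_pt D x ->
  PV_cauchy g a b x (G b - G a).
Proof.
  intros Hx Hfc HGc HGd HGD HDc e He.
  set (f := fun t => g t / (x - t)) in *.
  destruct (HDc (e / 2) ltac:(lra)) as [del [Hdel HD]].
  exists (Rmin del (Rmin (x - a) (b - x))).
  split; [apply Rmin_glb_lt; [|apply Rmin_glb_lt]; lra|].
  intros eps Heps.
  assert (Hsmall : eps < del /\ eps < x - a /\ eps < b - x)
    by (unfold Rmin in Heps; repeat destruct Rle_dec; lra).
  assert (Hside : forall u v, a <= u <= v -> v <= b -> (v < x \/ x < u) ->
            ex_RInt f u v /\ RInt f u v = G v - G u).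
  { intros u v Huv Hv Hout. split.
    - apply (@ex_RInt_continuous R_CompleteNormedModule). intros z Hz.
      rewrite Rmin_left, Rmax_right in Hz by lra.
      apply continuous_continuity_pt, Hfc; lra.
    - apply RInt_open_primitive; try lra.
      + intros z Hz. apply Hfc; lra.
      + intros z Hz. apply HGc; lra.
      + intros z Hz. apply HGd; lra. }
  destruct (Hside a (x - eps) ltac:(lra) ltac:(lra) ltac:(lra)) as [Hex1 HI1].
  destruct (Hside (x + eps) b ltac:(lra) ltac:(lra) ltac:(lra)) as [Hex2 HI2].
  exists (ex_RInt_Reals_0 _ _ _ Hex1), (ex_RInt_Reals_0 _ _ _ Hex2).
  rewrite <- !RInt_Reals. fold f. rewrite HI1, HI2, !HGD.
  replace ((x - (x - eps)) ^ 2) with ((x - (x + eps)) ^ 2) by ring.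
  assert (H1 : Rabs (D (x - eps) - D x) < e / 2).
  { apply (HD (x - eps)). split; [split; [exact I | lra]|].
    simpl. unfold R_dist. rewrite Rabs_left by lra. lra. }
  assert (H2 : Rabs (D (x + eps) - D x) < e / 2).
  { apply (HD (x + eps)). split; [split; [exact I | lra]|].
    simpl. unfold R_dist. rewrite Rabs_right by lra. lra. }
  apply Rabs_def2 in H1. apply Rabs_def2 in H2. apply Rabs_def1; lra.
Qed.

(* A primitive of psi_k(s)/(x-s) on [0,1] minus {x}, from
   psi_k(s)/(x-s) = K (diff_quot b n s w(s) + b^n w(s)/(x-s)), b = 1-x, n = 2k,
   together with its regular part. *)
Definition psik_prim (k : nat) (x s : R) : R :=
  - (cst k / PI) * (RInt (fun t => diff_quot (1 - x) (2 * k) t * w t) 0 s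
                    + (1 - x) ^ (2 * k) * cauchy_prim x s).

Definition psik_reg (k : nat) (x s : R) : R :=
  - (cst k / PI) * (RInt (fun t => diff_quot (1 - x) (2 * k) t * w t) 0 s
                    + (1 - x) ^ (2 * k) * cauchy_reg x s).

Lemma psik_prim_split k x s :
  psik_prim k x s
  = psik_reg k x s + (cst k / PI * (1 - x) ^ (2 * k) * w x / 2) * ln ((x - s) ^ 2).
Proof.
  unfold psik_prim, psik_reg, cauchy_prim. field. apply PI_neq0.
Qed.

Lemma is_derive_psik_prim k x s : 0 < x < 1 -> 0 < s < 1 -> s <> x ->
  derivable_pt_lim (psik_prim k x) s (psik k s / (x - s)).
Proof.
  intros Hx Hs Hsx. apply is_derive_Reals. unfold psik_prim.
  eapply is_derive_value.
  { apply (is_derive_scal (fun s => RInt (fun t => diff_quot (1 - x) (2 * k) t * w t) 0 s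
                                    + (1 - x) ^ (2 * k) * cauchy_prim x s)).
    apply (is_derive_plus (fun s => RInt (fun t => diff_quot (1 - x) (2 * k) t * w t) 0 s)
                          (fun s => (1 - x) ^ (2 * k) * cauchy_prim x s)).
    - apply is_derive_RInt_cont, continuous_diff_quot_w.
    - apply (is_derive_scal (cauchy_prim x)). now apply is_derive_cauchy_prim. }
  unfold scal, plus, mult; simpl. change (k + (k + 0))%nat with (2 * k)%nat.
  rewrite psik_moment. unfold moment_integrand.
  replace ((1 - s) ^ (2 * k)) with ((1 - x) ^ (2 * k) + diff_quot (1 - x) (2 * k) s * (x - s))
    by (rewrite diff_quot_spec; ring).
  field. pose proof PI_neq0. split; lra.
Qed.

Lemma continuous_psik_prim_RInt k x s :
  continuous (fun s => RInt (fun t => diff_quot (1 - x) (2 * k) t * w t) 0 s) s.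
Proof.
  apply continuous_continuity_pt, derivable_continuous_pt.
  eexists. apply is_derive_Reals, is_derive_RInt_cont, continuous_diff_quot_w.
Qed.

Lemma continuous_psik_prim k x s : 0 < x < 1 -> 0 <= s <= 1 -> s <> x ->
  continuity_pt (psik_prim k x) s.
Proof.
  intros Hx Hs Hsx. apply continuity_pt_continuous. unfold psik_prim.
  pose proof (continuous_psik_prim_RInt k x s).
  pose proof (continuous_cauchy_prim x s Hx Hs Hsx).
  continuity_tac; auto.
Qed.

Lemma continuous_psik_reg k x : 0 < x < 1 -> continuity_pt (psik_reg k x) x.
Proof.
  intros Hx. apply continuity_pt_continuous. unfold psik_reg.
  pose proof (continuous_psik_prim_RInt k x x).
  pose proof (continuous_cauchy_reg x x Hx ltac:(lra)).
  continuity_tac; auto.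
Qed.

(* The value of the principal value: K (PI R_n(b) + b^n (x-1/2) PI) = cst k P_n(x). *)
Lemma psik_prim_increment k x : 0 < x < 1 ->
  psik_prim k x 1 - psik_prim k x 0 = cst k * dV_poly (2 * k) x.
Proof.
  intros Hx. pose proof PI_RGT_0.
  unfold psik_prim. rewrite RInt_point, RInt_diff_quot_w, dV_poly_closed.
  unfold zero; simpl. as_real_eq.
  replace (cauchy_prim x 1) with (cauchy_prim x 0 + (x - 1/2) * PI)
    by (rewrite <- cauchy_prim_increment by lra; ring).
  field. lra.
Qed.

Lemma psik_PV k x : 0 < x < 1 -> PV_cauchy (psik k) 0 1 x (cst k * dV_poly (2 * k) x).
Proof.
  intros Hx. rewrite <- psik_prim_increment by exact Hx.
  apply (PV_log_primitive (psik k) (psik_prim k x) (psik_reg k x) 0 1 x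
           (cst k / PI * (1 - x) ^ (2 * k) * w x / 2)).
  - exact Hx.
  - intros s Hs Hsx. apply continuity_pt_continuous, continuous_Rdiv; [lra | |continuity_tac].
    apply continuous_psik.
  - intros s Hs Hsx. now apply continuous_psik_prim.
  - intros s Hs Hsx. now apply is_derive_psik_prim.
  - intros s. apply psik_prim_split.
  - now apply continuous_psik_reg.
Qed.

Theorem mainTheorem1 (k : nat) :
  (forall x, 0 < x < 1 -> 0 < psik k x) /\
  (exists pr : Riemann_integrable (psik k) 0 1, RiemannInt pr = 1) /\
  (forall x, 0 < x < 1 ->
     exists L, PV_cauchy (psik k) 0 1 x L /\ derivable_pt_lim (Vk k) x (2 * L)).
Proof.
  split; [|split].
  - apply psik_pos.
  - apply psik_normalised.
  - intros x Hx. exists (cst k * dV_poly (2 * k) x). split.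
    + now apply psik_PV.
    + apply is_derive_Reals.
      replace (2 * (cst k * dV_poly (2 * k) x)) with (2 * cst k * dV_poly (2 * k) x) by ring.
      apply is_derive_Vk.
Qed.
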